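(* Let $A$ be a minimal $n$-state nondeterministic finite automaton accepting a non-empty language that is prefix-free, suffix-free, or infix-free. Then the minimal deterministic finite automaton accepting $L(A)$ has at least $n+1$ states.
   Context: NFAs have a single initial state and a transition function $\delta:Q\times\Sigma\to 2^Q$ that may map to the empty set (no sink state is needed or counted); DFAs are complete, so a sink state is counted. A minimal $n$-state NFA is an NFA with $n$ states such that no NFA with fewer states accepts the same language. With $\Sigma^+=\Sigma^*\setminus\{\lambda\}$: $L\subseteq\Sigma^*$ is prefix-free if $y\in L$ implies $yz\notin L$ for all $z\in\Sigma^+$; suffix-free if $y\in L$ implies $xy\notin L$ for all $x\in\Sigma^+$; infix-free if $y\in L$ implies $xyz\notin L$ for all $x,z\in\Sigma^*$ with $xz\in\Sigma^+$. *)

From mathcomp Require Import all_boot.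
Set Implicit Arguments.
Unset Strict Implicit.
Unset Printing Implicit Defensive.

Record nfa (S : finType) (n : nat) := NFA {
  nfa_init : 'I_n;
  nfa_delta : 'I_n -> S -> {set 'I_n};
  nfa_final : {set 'I_n} }.

Definition nfa_reach (S : finType) (n : nat) (A : nfa S n)
    (P : {set 'I_n}) (w : seq S) : {set 'I_n} :=
  foldl (fun (P : {set 'I_n}) (a : S) => \bigcup_(q in P) nfa_delta A q a) P w.

Definition nfa_accepts (S : finType) (n : nat) (A : nfa S n) (w : seq S) : bool :=
  [exists q in nfa_reach A [set nfa_init A] w, q \in nfa_final A].

(* complete DFA with m states (a sink state, if any, is among the m). *)
Record dfa (S : finType) (m : nat) := DFA {
  dfa_init : 'I_m;
  dfa_delta : 'I_m -> S -> 'I_m;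
  dfa_final : {set 'I_m} }.

Definition dfa_accepts (S : finType) (m : nat) (D : dfa S m) (w : seq S) : bool :=
  foldl (dfa_delta D) (dfa_init D) w \in dfa_final D.

Definition minimal_nfa (S : finType) (n : nat) (A : nfa S n) : Prop :=
  forall (m : nat) (B : nfa S m),
    (forall w, nfa_accepts B w = nfa_accepts A w) -> n <= m.

Definition prefix_free (S : finType) (L : seq S -> bool) : Prop :=
  forall y z : seq S, L y -> z != [::] -> ~~ L (y ++ z).

Definition suffix_free (S : finType) (L : seq S -> bool) : Prop :=
  forall x y : seq S, L y -> x != [::] -> ~~ L (x ++ y).

Definition infix_free (S : finType) (L : seq S -> bool) : Prop :=
  forall x y z : seq S, L y -> x ++ z != [::] -> ~~ L (x ++ y ++ z).

(* A DFA for a non-empty prefix-free or suffix-free language has a dead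
   state, i.e. a state from which no word is accepted, and it is not the
   initial state.  For a prefix-free language it is reached by any proper
   extension of an accepted word; for a suffix-free one, the run on a, aa,
   aaa, ... revisits some state after a^i and a^j (i < j), and that state is
   dead, since a^i z accepted would force a^j z = a^(j-i) a^i z accepted.
   Deleting the dead state (and every transition into it) leaves an NFA
   with one state fewer for the same language; an infix-free language is
   suffix-free, so minimality of A gives n <= m - 1. *)

From mathcomp Require Import all_boot.

Set Implicit Arguments.
Unset Strict Implicit.
Unset Printing Implicit Defensive.

Lemma eq_prefix_free (S : finType) (L1 L2 : seq S -> bool) :
  L1 =1 L2 -> prefix_free L1 -> prefix_free L2.
Proof. by move=> eqL freeL1 y z; rewrite -!eqL; apply: freeL1. Qed.

Lemma eq_suffix_free (S : finType) (L1 L2 : seq S -> bool) :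
  L1 =1 L2 -> suffix_free L1 -> suffix_free L2.
Proof. by move=> eqL freeL1 x y; rewrite -!eqL; apply: freeL1. Qed.

Lemma infix_free_suffix_free (S : finType) (L : seq S -> bool) :
  infix_free L -> suffix_free L.
Proof.
by move=> freeL x y Ly x0; have := freeL x y [::] Ly; rewrite !cats0; apply.
Qed.

Lemma nfa_reach_set0 (S : finType) (n : nat) (A : nfa S n) (w : seq S) :
  nfa_reach A set0 w = set0.
Proof. by elim: w => [|a w IHw] //=; rewrite /nfa_reach /= big_set0. Qed.

Section DeadState.

Variables (S : finType) (m : nat) (D : dfa S m).

Definition dfa_dead (q : 'I_m) : Prop :=
  forall z, foldl (dfa_delta D) q z \notin dfa_final D.

Lemma dfa_dead_neq_init (q : 'I_m) (w : seq S) :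
  dfa_accepts D w -> dfa_dead q -> q != dfa_init D.
Proof.
by move=> Dw dead_q; apply: contraTneq Dw; rewrite /dfa_accepts => <-; exact: dead_q.
Qed.

Lemma prefix_free_dfa_dead (w : seq S) (a : S) :
  prefix_free (dfa_accepts D) -> dfa_accepts D w ->
  dfa_dead (foldl (dfa_delta D) (dfa_init D) (rcons w a)).
Proof.
move=> freeD Dw z; rewrite -foldl_cat cat_rcons.
exact: freeD w (a :: z) Dw isT.
Qed.

Lemma dfa_run_nseq_loop (a : S) :
  exists i j, i < j /\
    foldl (dfa_delta D) (dfa_init D) (nseq i a) =
    foldl (dfa_delta D) (dfa_init D) (nseq j a).
Proof.
pose f (k : 'I_m.+1) := foldl (dfa_delta D) (dfa_init D) (nseq k a).
have /injectivePn[i [j neq_ij eq_fij]] : ~~ injectiveb f.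
  by apply: contraTN isT => /injectiveP/leq_card; rewrite !card_ord ltnn.
case: (ltngtP i j) => [lt_ij|lt_ji|/val_inj eq_ij]; last by rewrite eq_ij eqxx in neq_ij.
- by exists i, j.
- by exists j, i.
Qed.

Lemma suffix_free_dfa_dead (a : S) :
  suffix_free (dfa_accepts D) -> exists q, dfa_dead q.
Proof.
move=> freeD; have [i [j [lt_ij loop]]] := dfa_run_nseq_loop a.
exists (foldl (dfa_delta D) (dfa_init D) (nseq i a)) => z; apply/negP => Dz.
have Dai : dfa_accepts D (nseq i a ++ z) by rewrite /dfa_accepts foldl_cat.
have ne_loop : nseq (j - i) a != [::].
  by rewrite -size_eq0 size_nseq subn_eq0 -ltnNge.
have := freeD _ _ Dai ne_loop.
by rewrite catA -nseqD subnK ?(ltnW lt_ij) // /dfa_accepts foldl_cat -loop Dz.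
Qed.

End DeadState.

Section DeadStateRemoval.

Variables (S : finType) (m : nat) (D : dfa S m.+1) (q : 'I_m.+1).

Definition dfa_delete_state (p0 : 'I_m) : nfa S m :=
  NFA p0
    (fun p a => if unlift q (dfa_delta D (lift q p) a) is Some p' then [set p'] else set0)
    [set p | lift q p \in dfa_final D].

Lemma dfa_delete_dead_state_accepts_from (p0 p : 'I_m) (w : seq S) :
  dfa_dead D q ->
  [exists x in nfa_reach (dfa_delete_state p0) [set p] w,
     x \in nfa_final (dfa_delete_state p0)] =
  (foldl (dfa_delta D) (lift q p) w \in dfa_final D).
Proof.
move=> dead_q; elim: w p => [|a w IHw] p.
  apply/existsP/idP => [[x /andP[/set1P -> ]]|final_p]; first by rewrite inE.
  by exists p; rewrite set11 inE.
rewrite /nfa_reach /= big_set1 /= -/(nfa_reach (dfa_delete_state p0) _ w).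
case: unliftP => [p'|] ->; first exact: IHw.
rewrite nfa_reach_set0 (negbTE (dead_q w)).
by apply/existsP => -[x]; rewrite inE.
Qed.

Lemma dfa_delete_dead_state_accepts :
  dfa_dead D q -> q != dfa_init D ->
  exists B : nfa S m, nfa_accepts B =1 dfa_accepts D.
Proof.
move=> dead_q /unlift_some[p0 init_p0 _].
exists (dfa_delete_state p0) => w.
by rewrite /nfa_accepts dfa_delete_dead_state_accepts_from // /dfa_accepts init_p0.
Qed.

End DeadStateRemoval.

Theorem mainTheorem4 (S : finType) (n : nat) (A : nfa S n) :
  0 < #|S| ->
  minimal_nfa A ->
  (exists w, nfa_accepts A w) ->
  prefix_free (nfa_accepts A) \/ suffix_free (nfa_accepts A) \/
    infix_free (nfa_accepts A) ->
  forall (m : nat) (D : dfa S m),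
    (forall w, dfa_accepts D w = nfa_accepts A w) -> n.+1 <= m.
Proof.
move=> /card_gt0P[a _] minA [w Aw] freeA [|m] D DA; first by case: (dfa_init D).
have AD : nfa_accepts A =1 dfa_accepts D by move=> v; rewrite DA.
have Dw : dfa_accepts D w by rewrite DA.
have [q dead_q] : exists q, dfa_dead D q.
  case: freeA => [/(eq_prefix_free AD) freeD | freeA].
    by exists (foldl (dfa_delta D) (dfa_init D) (rcons w a)); apply: prefix_free_dfa_dead.
  apply: (suffix_free_dfa_dead a); apply: eq_suffix_free AD _.
  by case: freeA => [//|]; apply: infix_free_suffix_free.
have [B BD] := dfa_delete_dead_state_accepts dead_q (dfa_dead_neq_init Dw dead_q).
by apply: (minA m B) => v; rewrite BD DA.
Qed.
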